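(* Let $X\subseteq\mathbb{N}$ be finite, $\omega^{n+3}$-large and exp-sparse, and let $d\in\mathbb{N}$ with $d\le\min X$. Then $X$ admits an $(\omega^n,d)$-grouping: for every colouring $P:[X]^2\to2$ there is an $(\omega^n,d)$-grouping for $P$.
   Context: Ordinals below $\omega^\omega$ are in Cantor normal form; a natural number $d$ is the ordinal $\omega^0\cdot d$; $\omega^j\cdot m$ = sum of $m$ copies of $\omega^j$. For $m\in\mathbb{N}$: $0[m]=0$, $(\beta+1)[m]=\beta$, $(\beta+\omega^{n})[m]=\beta+\omega^{n-1}\cdot m$ for $n\ge1$. A finite $X=\{x_0<\dots<x_{\ell-1}\}\subseteq\mathbb{N}$ is $\alpha$-large if $\alpha[x_0]\cdots[x_{\ell-1}]=0$ (so $d$-large means having at least $d$ elements). A set $X$ with $\min X\ge3$ is exp-sparse if $x<y$ in $X$ implies $4^x<y$. For $P:[X]^2\to2$, a finite sequence $\langle F_i\subseteq X:i<\ell\rangle$ of finite sets is an $(\alpha,\beta)$-grouping for $P$ if: (1) $\max F_i<\min F_j$ for $i<j<\ell$; (2) each $F_i$ is $\alpha$-large; (3) $\{\max F_i:i<\ell\}$ is $\beta$-large; (4) for all $i<j<\ell$, $x,x'\in F_i$, $y,y'\in F_j$: $P(x,y)=P(x',y')$. *)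

From mathcomp Require Import all_boot.
Set Implicit Arguments. Unset Strict Implicit. Unset Printing Implicit Defensive.

(* Ordinals below omega^omega in Cantor normal form
   alpha = omega^{e_1} + ... + omega^{e_k} with e_1 >= ... >= e_k
   are represented by the list of exponents in REVERSE order
   [:: e_k; ...; e_1] (smallest, i.e. last, term first). *)
Definition ord := seq nat.

Definition cnf (a : ord) : bool := sorted leq a.

Definition oexp (j : nat) : ord := [:: j].
Definition onat (d : nat) : ord := nseq d 0.

(* fundamental sequence: 0[m] = 0, (b+1)[m] = b,
   (b + omega^(n+1))[m] = b + omega^n * m *)
Definition fs (a : ord) (m : nat) : ord :=
  match a with
  | [::] => [::]
  | 0 :: b => b
  | n.+1 :: b => nseq m n ++ b
  end.

(* finite subsets of N are represented by strictly increasing lists *)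
Definition finset_nat (X : seq nat) : bool := sorted ltn X.

Definition large (a : ord) (X : seq nat) : bool := foldl fs a X == [::].

Definition minX (X : seq nat) : nat := head 0 X.
Definition maxX (X : seq nat) : nat := last 0 X.

Definition exp_sparse (X : seq nat) : Prop :=
  (forall x, x \in X -> 3 <= x) /\
  (forall x y, x \in X -> y \in X -> x < y -> 4 ^ x < y).

(* (alpha,beta)-grouping for P : [X]^2 -> 2 (P x y read for x < y) *)
Definition grouping (a b : ord) (X : seq nat) (P : nat -> nat -> bool)
    (Fs : seq (seq nat)) : Prop :=
  (forall i, i < size Fs -> finset_nat (nth [::] Fs i) /\
                            {subset nth [::] Fs i <= X}) /\
  (forall i j, i < j -> j < size Fs ->
     maxX (nth [::] Fs i) < minX (nth [::] Fs j)) /\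
  (forall i, i < size Fs -> large a (nth [::] Fs i)) /\
  large b (map maxX Fs) /\
  (forall i j, i < j -> j < size Fs ->
     forall x x' y y', x \in nth [::] Fs i -> x' \in nth [::] Fs i ->
       y \in nth [::] Fs j -> y' \in nth [::] Fs j -> P x y = P x' y').

From mathcomp Require Import all_boot zify.
Set Implicit Arguments. Unset Strict Implicit. Unset Printing Implicit Defensive.

(* Weaken ω^(n+3) to ω^(n+2) and write X = x0 :: X': then X' is ω^(n+1)·x0-large, so it splits
   into x0 >= d consecutive ω^(n+1)-large blocks.  Going backwards through the first d blocks, a
   block b :: B is ω^n·b-large after its least element b.  Colour its elements by their colours
   towards 1..p, where p bounds everything before the block, and towards the least element of
   every group already chosen in a later block.  By exp-sparseness there are at most 4^p < b
   colours, so a pigeonhole principle for sparse sets gives an ω^n-large colour class: the group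
   of the block.  For x in an earlier and y in a later group, P x y = P x z with z the least
   element of the later group, which is homogeneous towards 1..p, and P x z is constant on the
   earlier group, a colour class.

   Ordinals are compared through the multiplicities of their exponents; the engine behind both
   the weakening and the pigeonhole principle is that along a sparse set, β-largeness implies
   α-largeness for α <= β. *)

Lemma large0 Y : large [::] Y.
Proof. by elim: Y. Qed.

Lemma large_cons a y Y : large a (y :: Y) = large (fs a y) Y.
Proof. by []. Qed.

Lemma count_fs h t y j :
  count_mem j (fs (h :: t) y) = count_mem j t + (if h is e.+1 then (e == j) * y else 0).
Proof. by case: h => [|e] /=; rewrite ?count_cat ?count_nseq ?addn0 // addnC. Qed.

Lemma count_fs_head h t y : (count_mem h (fs (h :: t) y)).+1 = count_mem h (h :: t).
Proof.
rewrite count_fs /= eqxx; case: h => [|e]; first by rewrite addn0.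
by rewrite (_ : (e == e.+1) = false) ?muln0 ?addn0 //; apply/negbTE; lia.
Qed.

Lemma count_fs_pred e t y : count_mem e (fs (e.+1 :: t) y) = count_mem e (e.+1 :: t) + y.
Proof.
rewrite count_fs /= eqxx mul1n (_ : (e.+1 == e) = false) //; apply/negbTE; lia.
Qed.

Lemma count_fs_other h t y j : j != h -> j.+1 != h ->
  count_mem j (fs (h :: t) y) = count_mem j (h :: t).
Proof.
rewrite count_fs /= eq_sym => /negbTE ->; case: h => [|e] ne_Sj; rewrite ?addn0 //.
by rewrite (_ : (e == j) = false) ?addn0 //; apply/eqP => e_j; rewrite e_j eqxx in ne_Sj.
Qed.

Lemma count_cnf_below h t j : cnf (h :: t) -> j < h -> count_mem j (h :: t) = 0.
Proof.
move=> /(order_path_min leq_trans) /allP le_h j_lt_h; apply/count_memPn.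
by rewrite inE negb_or (ltn_eqF j_lt_h); apply/negP => /le_h; lia.
Qed.

Lemma cnf_fs a y : cnf a -> cnf (fs a y).
Proof.
rewrite /cnf; case: a => [//|[|e] t] /= cnf_a; first exact: path_sorted cnf_a.
have path_e k : path leq e (ncons k e t).
  by elim: k => /= [|k ->]; rewrite ?leqnn // (path_le leq_trans (leqnSn e) cnf_a).
by rewrite cat_nseq; case: y => [|y] /=; [exact: path_sorted cnf_a | exact: path_e].
Qed.

Lemma size_fs a y : size (fs a y) <= size a + y.
Proof. by case: a => [|[|e] t] //=; rewrite ?size_cat ?size_nseq; lia. Qed.

Lemma eq_cnf a b : cnf a -> cnf b -> (forall j, count_mem j a = count_mem j b) -> a = b.
Proof.
move=> cnf_a cnf_b eq_ab; apply: (sorted_eq leq_trans anti_leq cnf_a cnf_b).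
by apply/allP => x _; apply/eqP; exact: eq_ab.
Qed.

Definition ord_lt (a b : ord) : Prop :=
  exists k, count_mem k a < count_mem k b /\ forall j, k < j -> count_mem j a = count_mem j b.

Definition ord_le (a b : ord) : Prop := a = b \/ ord_lt a b.

Lemma ord_lt_nil a : ~ ord_lt a [::].
Proof. by case=> k []. Qed.

Lemma ord_lt_le_trans a b c : ord_lt a b -> ord_le b c -> ord_lt a c.
Proof.
move=> [k1 [lt1 eq1]] [<- //|[k2 [lt2 eq2]]]; first by exists k1.
case: (ltngtP k1 k2) => [lt_k|lt_k|eq_k].
- exists k2; split=> [|j lt_j]; first by rewrite eq1.
  by rewrite eq1 ?eq2 //; exact: ltn_trans lt_j.
- exists k1; split=> [|j lt_j]; first by rewrite -eq2.
  by rewrite eq1 ?eq2 //; exact: ltn_trans lt_j.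
- subst k2; exists k1; split=> [|j lt_j]; first exact: ltn_trans lt2.
  by rewrite eq1 ?eq2.
Qed.

Lemma fs_ord_lt h t y : ord_lt (fs (h :: t) y) (h :: t).
Proof.
exists h; split=> [|j lt_hj]; first by rewrite -(count_fs_head h t y).
by apply: count_fs_other; apply/eqP; lia.
Qed.

(* a[y] trades one copy of ω^(e+1) for y copies of ω^e, more than g can have. *)
Lemma ord_le_fs g a y : cnf g -> cnf a -> ord_lt g a -> size g < y -> ord_le g (fs a y).
Proof.
case: a => [|h t] cnf_g cnf_a [k [lt_k eq_k]] size_g; first by [].
have fs_above j : h < j -> count_mem j (fs (h :: t) y) = count_mem j (h :: t).
  by move=> lt_hj; apply: count_fs_other; apply/eqP; lia.
case: (ltngtP k h) => [lt_kh|lt_hk|eq_kh]; first by rewrite count_cnf_below in lt_k.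
  right; exists k; split=> [|j lt_kj]; first by rewrite fs_above.
  by rewrite fs_above ?eq_k //; exact: ltn_trans lt_kj.
subst k; have above j : h < j -> count_mem j g = count_mem j (fs (h :: t) y).
  by move=> lt_hj; rewrite fs_above ?eq_k.
have fs_head := count_fs_head h t y.
case: (ltngtP (count_mem h g) (count_mem h (fs (h :: t) y))) => [lt_h|gt_h|eq_h].
- by right; exists h.
- by rewrite ltnNge -ltnS fs_head lt_k in gt_h.
case: h cnf_a lt_k above eq_h {fs_above eq_k fs_head} => [|e] cnf_a lt_k above eq_h.
  by left; apply: eq_cnf (cnf_fs _ cnf_a) _ => // -[|j] //; exact: above.
right; exists e; split.
  by rewrite count_fs_pred; apply: ltn_addl; exact: leq_ltn_trans (count_size _ g) size_g.
by move=> j; rewrite leq_eqVlt => /predU1P [<- //|]; exact: above.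
Qed.

Definition sparse2 (x y : nat) : bool := 2 * x < y.

Lemma sparse2_trans : transitive sparse2.
Proof. rewrite /sparse2 => y x z; lia. Qed.

Lemma path_sparse2_gt y Y z : path sparse2 y Y -> z \in Y -> 2 * y < z.
Proof. by move/(order_path_min sparse2_trans)/allP; apply. Qed.

(* Sparseness keeps [size g] below the next element, as [ord_le_fs] requires at each step. *)
Lemma large_ord_le Y g a : sorted sparse2 Y -> cnf g -> cnf a -> ord_le g a ->
  (forall z, z \in Y -> size g < z) -> large a Y -> large g Y.
Proof.
elim: Y g a => [|y Y IH] g a sparse_Y cnf_g cnf_a le_ga size_g.
  by move/eqP=> /= a0; subst a; case: le_ga => [->|/ord_lt_nil].
case: g cnf_g le_ga size_g => [_ _ _ _|h t cnf_g le_ga size_g]; first exact: large0.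
case: a cnf_a le_ga => [_ [//|/ord_lt_nil //]|h' t' cnf_a le_ga].
rewrite !large_cons; apply: IH (path_sorted sparse_Y) (cnf_fs _ cnf_g) (cnf_fs _ cnf_a) _ _.
- case: le_ga => [-> | lt_ga]; first by left.
  right; apply: ord_lt_le_trans (fs_ord_lt h t y) (ord_le_fs cnf_g cnf_a lt_ga _).
  exact: size_g (mem_head _ _).
- move=> z z_Y; have := path_sparse2_gt sparse_Y z_Y; have := size_g y (mem_head _ _).
  by have := size_fs (h :: t) y; lia.
Qed.

Definition osum (a b : ord) : ord := sort leq (a ++ b).

Lemma cnf_osum a b : cnf (osum a b).
Proof. exact: sort_sorted leq_total _. Qed.

Lemma count_osum j a b : count_mem j (osum a b) = count_mem j a + count_mem j b.
Proof. by rewrite -count_cat; apply/permP; rewrite perm_sort. Qed.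

Lemma size_osum a b : size (osum a b) = size a + size b.
Proof. by rewrite size_sort size_cat. Qed.

Lemma osumC a b : osum a b = osum b a.
Proof. by apply: eq_cnf; rewrite ?cnf_osum // => j; rewrite !count_osum addnC. Qed.

Lemma mem_osum a b z : (z \in osum a b) = (z \in a ++ b).
Proof. exact: mem_sort. Qed.

(* Equality if a carries the least exponent of a # b, else strict inequality at exponent [h]. *)
Lemma fs_osum_ord_le h t b y : cnf (h :: t) -> cnf b ->
  ord_le (osum (fs (h :: t) y) b) (fs (osum (h :: t) b) y).
Proof.
move=> cnf_a cnf_b.
case E: (osum (h :: t) b) => [|m s]; first by move: (size_osum (h :: t) b); rewrite E.
have cnf_ms : cnf (m :: s) by rewrite -E cnf_osum.
have m_min z : z \in (h :: t) ++ b -> m <= z.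
  move=> z_in; rewrite -mem_osum E inE in z_in; case/predU1P: z_in => [-> //|].
  by have /allP := order_path_min leq_trans cnf_ms; apply.
have count_ms j : count_mem j (m :: s) = count_mem j (h :: t) + count_mem j b.
  by rewrite -E count_osum.
have [m_lt_h|] := ltnP m h.
  have fs_ms j : h <= j -> count_mem j (fs (m :: s) y) = count_mem j (h :: t) + count_mem j b.
    by move=> le_hj; rewrite count_fs_other ?count_ms //; apply/eqP; lia.
  right; exists h; split=> [|j lt_hj]; rewrite count_osum fs_ms ?(ltnW lt_hj) //.
    by rewrite ltn_add2r -(count_fs_head h t y).
  by rewrite count_fs_other //; apply/eqP; lia.
rewrite leq_eqVlt => /predU1P [eq_hm|]; last first.
  by rewrite ltnNge m_min // mem_cat mem_head.
subst m; left; apply: eq_cnf; rewrite ?cnf_fs ?cnf_osum // => j.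
rewrite count_osum !count_fs; move: (count_ms j) => /= /eqP.
by rewrite -addnA eqn_add2l => /eqP ->; exact: addnAC.
Qed.

Lemma large_osum_fs a b y Y : cnf a -> cnf b -> a != [::] -> size a + size b < y ->
  path sparse2 y Y -> large (osum a b) (y :: Y) -> large (osum (fs a y) b) Y.
Proof.
case: a => [//|h t] cnf_a cnf_b _ size_y sparse_Y.
rewrite large_cons; apply: large_ord_le (path_sorted sparse_Y) (cnf_osum _ _)
  (cnf_fs _ (cnf_osum _ _)) (fs_osum_ord_le _ cnf_a cnf_b) _.
move=> z z_Y; rewrite size_osum; have := path_sparse2_gt sparse_Y z_Y.
by have := size_fs (h :: t) y; lia.
Qed.

Lemma large_osum_split (p : pred nat) a b Y : sorted sparse2 Y -> cnf a -> cnf b ->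
  (forall z, z \in Y -> size a + size b < z) -> large (osum a b) Y ->
  large a (filter p Y) \/ large b (filter (predC p) Y).
Proof.
elim: Y a b => [|y Y IH] a b sparse_Y cnf_a cnf_b size_Y.
  by rewrite /large /= -size_eq0 size_osum addn_eq0 => /andP [/nilP -> _]; left.
have size_y := size_Y y (mem_head _ _).
have grow z : z \in Y -> size a + size b + y < z.
  by move=> z_Y; have := path_sparse2_gt sparse_Y z_Y; lia.
move: (path_sorted sparse_Y) => sparse_Y'; rewrite /=; case: (p y) => /= large_ab.
- case: a cnf_a size_Y size_y large_ab grow => [|h t] cnf_a size_Y size_y large_ab grow.
    by left; apply: large0.
  have := large_osum_fs cnf_a cnf_b isT size_y sparse_Y large_ab.
  case/IH; rewrite ?cnf_fs //; [|by left|by right].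
  by move=> z /grow; have := size_fs (h :: t) y; lia.
- case: b cnf_b size_Y size_y large_ab grow => [|h t] cnf_b size_Y size_y large_ab grow.
    by right; apply: large0.
  rewrite osumC addnC in large_ab size_y.
  have := large_osum_fs cnf_b cnf_a isT size_y sparse_Y large_ab; rewrite osumC.
  case/IH; rewrite ?cnf_fs //; [|by left|by right].
  by move=> z /grow; have := size_fs (h :: t) y; lia.
Qed.

Lemma cnf_nseq k e : cnf (nseq k e).
Proof. by elim: k => [|[|k] IH] //=; rewrite leqnn. Qed.

Lemma large_pigeonhole m (col : nat -> nat) r Y : 0 < r -> sorted sparse2 Y ->
  (forall z, z \in Y -> col z < r) -> (forall z, z \in Y -> r < z) ->
  large (nseq r m) Y -> exists c, large (oexp m) [seq z <- Y | col z == c].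
Proof.
elim: r Y => [//|[|r] IH] Y _ sparse_Y col_lt r_lt large_Y.
  exists 0; rewrite (@eq_in_filter _ _ predT) ?filter_predT // => z /col_lt.
  by rewrite ltnS leqn0.
have split_r : nseq r.+2 m = osum [:: m] (nseq r.+1 m).
  by rewrite /osum sorted_sort //; [exact: leq_trans | exact: cnf_nseq r.+2 m].
rewrite split_r in large_Y.
have size_Y z : z \in Y -> size [:: m] + size (nseq r.+1 m) < z.
  by move=> /r_lt; rewrite size_nseq.
have [large_c|] := large_osum_split (fun z => col z == r.+1) sparse_Y (cnf_nseq 1 m)
  (cnf_nseq _ _) size_Y large_Y.
  by exists r.+1.
set Y' := filter _ Y => large_Y'.
have [||c large_c] := IH Y' isT (sorted_filter sparse2_trans _ sparse_Y) _ _ large_Y'.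
- move=> z; rewrite mem_filter => /andP [/= ne_col /col_lt].
  by rewrite ltnS leq_eqVlt (negbTE ne_col).
- by move=> z; rewrite mem_filter => /andP [_ /r_lt]; lia.
exists c; rewrite /Y' -filter_predI in large_c.
case: (eqVneq c r.+1) large_c => [-> |ne_c].
  by rewrite (@eq_in_filter _ _ pred0) ?filter_pred0 // => z _ /=; rewrite andbN.
by congr large; apply: eq_in_filter => z _ /=; case: eqP => [->|]; rewrite ?andbT ?andbF.
Qed.

Lemma large_oexp_pigeonhole m (col : nat -> nat) r y Y : 0 < r -> r <= y -> path sparse2 y Y ->
  (forall z, z \in Y -> col z < r) -> large (oexp m.+1) (y :: Y) ->
  exists c, large (oexp m) [seq z <- Y | col z == c].
Proof.
move=> r_gt0 le_ry sparse_Y col_lt; rewrite large_cons [fs _ _]/= cats0 => large_Y.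
have r_lt z : z \in Y -> r < z by move/(path_sparse2_gt sparse_Y); lia.
apply: (large_pigeonhole r_gt0 (path_sorted sparse_Y) col_lt r_lt).
apply: large_ord_le (path_sorted sparse_Y) (cnf_nseq _ _) (cnf_nseq _ _) _ _ large_Y.
  case: (ltngtP r y) le_ry => [lt_ry _|//|-> _]; last by left.
  right; exists m; split=> [|j lt_mj]; rewrite !count_nseq /= ?eqxx ?ltn_eqF //.
  by rewrite !mul1n.
by move=> z; rewrite size_nseq; exact: r_lt.
Qed.

Lemma large_oexp_S m Y : sorted sparse2 Y -> (forall z, z \in Y -> 1 < z) ->
  large (oexp m.+1) Y -> large (oexp m) Y.
Proof.
move=> sparse_Y gt1; apply: large_ord_le sparse_Y (cnf_nseq 1 m) (cnf_nseq 1 m.+1) _ gt1.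
right; exists m.+1; split=> [|j lt_mj] /=; first by rewrite eqxx ltn_eqF.
by rewrite !ltn_eqF // ltnW.
Qed.

Lemma fs_cat a b y : a != [::] -> fs (a ++ b) y = fs a y ++ b.
Proof. by case: a => [|[|e] t] //= _; rewrite catA. Qed.

Lemma large_cat a b Y : a != [::] -> large (a ++ b) Y ->
  exists Y1 Y2, [/\ Y = Y1 ++ Y2, large a Y1 & large b Y2].
Proof.
elim: Y a => [[] //|y Y IH] a a_nil; rewrite large_cons fs_cat //.
case E: (fs a y) => [|h t] large_Y; first by exists [:: y], Y; rewrite large_cons E large0.
have [Y1 [Y2 [-> large1 large2]]] := IH (h :: t) isT large_Y.
by exists (y :: Y1), Y2; rewrite large_cons E.
Qed.

Lemma large_nseq_blocks e k d Y : d <= k -> large (nseq k e) Y ->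
  exists Bs W, [/\ size Bs = d, {in Bs, forall B, large (oexp e) B} & Y = flatten Bs ++ W].
Proof.
elim: d k Y => [|d IH] k Y le_dk large_Y; first by exists [::], Y.
case: k le_dk large_Y => [//|k] le_dk large_Y.
have [Y1 [Y2 [-> large1 large2]]] := large_cat (a := [:: e]) isT large_Y.
have [Bs [W [size_Bs large_Bs ->]]] := IH k Y2 le_dk large2.
exists (Y1 :: Bs), W; split; rewrite /= ?size_Bs ?catA //.
by move=> B /predU1P [->|/large_Bs].
Qed.

Definition sparse4 (x y : nat) : bool := 4 ^ x < y.

Lemma sparse4_sparse2 : subrel sparse4 sparse2.
Proof.
move=> x y; rewrite /sparse4 /sparse2; suff : 2 * x < 4 ^ x by lia.
by elim: x => [//|x IH]; rewrite expnS; lia.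
Qed.

Lemma sparse4_leq : subrel sparse4 leq.
Proof. by rewrite /sparse4 => x y; have := ltn_expl x (isT : 1 < 4); lia. Qed.

Lemma exp_sparse_sorted X : finset_nat X -> exp_sparse X -> sorted sparse4 X.
Proof.
move=> sorted_X [_ sparse_X]; apply: (sub_in_sorted (P := mem X)) sorted_X; last exact/allP.
by move=> x y x_X y_X; apply: sparse_X.
Qed.

Fixpoint nat_of_bits (s : seq bool) : nat :=
  if s is b :: s' then b + 2 * nat_of_bits s' else 0.

Lemma nat_of_bits_lt s : nat_of_bits s < 2 ^ size s.
Proof. by elim: s => [//|b s IH] /=; rewrite expnS; case: b; lia. Qed.

Lemma nat_of_bits_inj s t : size s = size t -> nat_of_bits s = nat_of_bits t -> s = t.
Proof.
elim: s t => [|b s IH] [|c t] //= [size_st] eq_st.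
have eq_bc : b = c by case: b c eq_st => [] [] /=; lia.
by subst c; congr cons; apply: IH => //; case: b eq_st => /=; lia.
Qed.

Lemma path_leq_last x s : path leq x s -> {in x :: s, forall u, u <= last x s}.
Proof.
elim: s x => [|y s IH] x /=; first by move=> _ u /predU1P [->|].
move=> /andP [le_xy path_y] u /predU1P [->|/IH -> //].
exact: leq_trans le_xy (IH y path_y y (mem_head _ _)).
Qed.

Lemma path_sparse4_range p b B : path sparse4 p (b :: B) ->
  [/\ 4 ^ p < b, p <= last b B & {in B, forall z, 0 < z <= last b B}].
Proof.
case/andP=> lt_pb sparse_bB.
have le_last := path_leq_last (sub_path sparse4_leq sparse_bB).
split=> // [|z z_B].
  have lt_p4 := ltn_expl p (isT : 1 < 4).
  exact: leq_trans (ltnW (ltn_trans lt_p4 lt_pb)) (le_last b (mem_head _ _)).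
have := path_sparse2_gt (sub_path sparse4_sparse2 sparse_bB) z_B.
by have := le_last z (mem_behead (s := b :: B) z_B); lia.
Qed.

Lemma large_homogeneous_subseq m k (f : nat -> seq bool) b B :
  2 ^ k <= b -> path sparse2 b B -> (forall z, z \in B -> size (f z) = k) ->
  large (oexp m.+1) (b :: B) ->
  exists2 F, subseq F B & large (oexp m) F /\ {in F &, forall y y', f y = f y'}.
Proof.
move=> le_kb sparse_B size_f large_B.
have [|c large_c] := large_oexp_pigeonhole (col := fun z => nat_of_bits (f z))
  (expn_gt0 2 k) le_kb sparse_B _ large_B.
  by move=> z /size_f <-; exact: nat_of_bits_lt.
exists [seq z <- B | nat_of_bits (f z) == c]; first exact: filter_subseq.
split=> // y y'; rewrite !mem_filter => /andP [/eqP f_y y_B] /andP [/eqP f_y' y'_B].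
by apply: nat_of_bits_inj; rewrite ?size_f // f_y f_y'.
Qed.

Section Grouping.
Variable P : nat -> nat -> bool.

Definition end_homogeneous (p : nat) (F : seq nat) : Prop :=
  forall u, 0 < u <= p -> {in F &, forall y y', P u y = P u y'}.

Definition pair_homogeneous (Fs : seq (seq nat)) : Prop :=
  forall i j, i < j -> j < size Fs -> forall x x' y y',
    x \in nth [::] Fs i -> x' \in nth [::] Fs i ->
    y \in nth [::] Fs j -> y' \in nth [::] Fs j -> P x y = P x' y'.

Lemma end_homogeneous_le p q F : p <= q -> end_homogeneous q F -> end_homogeneous p F.
Proof.
by move=> le_pq hom_F u /andP [u_gt0 le_up]; apply: hom_F; rewrite u_gt0 (leq_trans le_up).
Qed.

Lemma pair_homogeneous_cons F Fs : pair_homogeneous Fs ->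
  (forall G, G \in Fs -> forall x x' y y', x \in F -> x' \in F -> y \in G -> y' \in G ->
     P x y = P x' y') ->
  pair_homogeneous (F :: Fs).
Proof.
move=> hom_Fs hom_F [|i] [|j] //= lt_ij lt_j; last exact: hom_Fs.
by move=> x x' y y'; apply: hom_F; exact: mem_nth.
Qed.

(* The first block is coloured by [f] below, with 2 ^ (p + size Bs) <= 4 ^ p < b colours. *)
Lemma exists_grouping_blocks m p Bs : size Bs <= p -> path sparse4 p (flatten Bs) ->
  {in Bs, forall B, large (oexp m.+1) B} ->
  exists Fs, [/\ all2 subseq Fs Bs,
    {in Fs, forall F, large (oexp m) F /\ end_homogeneous p F} & pair_homogeneous Fs].
Proof.
elim: Bs p => [|B Bs IH] p; first by exists [::].
case: B => [_ _ /(_ [::] (mem_head _ _)) //|b B] size_Bs sparse_Bs large_Bs.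
have large_B := large_Bs _ (mem_head _ _).
have {}large_Bs : {in Bs, forall B', large (oexp m.+1) B'}.
  by move=> B' B'_in; apply: large_Bs; rewrite inE B'_in orbT.
move: sparse_Bs; rewrite [flatten _]/= -cat_cons cat_path => /andP [sparse_B sparse_rest].
rewrite [last _ _]/= in sparse_rest; set q := last b B in sparse_rest.
have [lt_pb le_pq B_range] := path_sparse4_range sparse_B.
have sparse_bB : path sparse2 b B by case/andP: sparse_B => _ /(sub_path sparse4_sparse2).
have size_q : size Bs <= q by move: size_Bs => /= /ltnW /leq_trans; apply.
have [Fs [sub_Fs large_Fs hom_Fs]] := IH q size_q sparse_rest large_Bs.
have size_Fs : size Fs = size Bs by move: sub_Fs; rewrite all2E => /andP [/eqP].
pose f y := [seq P u y | u <- iota 1 p] ++ [seq P y (head 0 G) | G <- Fs].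
have le_kb : 2 ^ (p + size Fs) <= b.
  apply: leq_trans (ltnW lt_pb); rewrite -[4]/(2 ^ 2) -expnM leq_exp2l // size_Fs.
  by move: size_Bs => /=; lia.
have size_f z : z \in B -> size (f z) = p + size Fs by rewrite size_cat !size_map size_iota.
have [F sub_F [large_F hom_F]] :=
  large_homogeneous_subseq le_kb sparse_bB size_f large_B.
have hom_f x x' : x \in F -> x' \in F ->
    {in iota 1 p, forall u, P u x = P u x'} /\ {in Fs, forall G, P x (head 0 G) = P x' (head 0 G)}.
  move=> x_F x'_F; have /eqP := hom_F x x' x_F x'_F.
  by rewrite eqseq_cat ?size_map // => /andP [/eqP/eq_in_map ? /eqP/eq_in_map ?].
have F_range x : x \in F -> 0 < x <= q by move=> x_F; apply/B_range/(mem_subseq sub_F).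
exists (F :: Fs); split.
- by apply/andP; split; first exact: subseq_trans sub_F (subseq_cons _ _).
- move=> G /predU1P [->|/large_Fs [large_G hom_G]].
    split=> // u u_range y y' y_F y'_F; apply: (hom_f y y' y_F y'_F).1.
    by rewrite mem_iota; lia.
  by split; last exact: end_homogeneous_le hom_G.
apply: pair_homogeneous_cons hom_Fs _ => G G_in x x' y y' x_F x'_F y_G y'_G.
have [large_G hom_G] := large_Fs G G_in.
have head_G : head 0 G \in G.
  by case: G large_G {G_in hom_G y_G y'_G} => [|h G] // _; exact: mem_head.
rewrite (hom_G x (F_range x x_F) y _ y_G head_G) (hom_G x' (F_range x' x'_F) y' _ y'_G head_G).
exact: (hom_f x x' x_F x'_F).2.
Qed.

End Grouping.

Lemma sorted_flatten (T : eqType) (r : rel T) Fs F :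
  sorted r (flatten Fs) -> F \in Fs -> sorted r F.
Proof.
elim: Fs => [//|G Fs IH] /= /cat_sorted2 [sorted_G sorted_Fs].
by case/predU1P => [->|/IH]; last exact.
Qed.

Lemma sorted_flatten_nth (T : eqType) (r : rel T) Fs i j x y : transitive r ->
  sorted r (flatten Fs) -> i < j < size Fs ->
  x \in nth [::] Fs i -> y \in nth [::] Fs j -> r x y.
Proof.
move=> r_trans; elim: Fs i j => [|F Fs IH] [|i] [|j] //=; last first.
  by move=> /cat_sorted2 [_ sorted_Fs]; exact: IH.
rewrite sorted_pairwise // pairwise_cat => /and3P [/allrelP r_F _ _] lt_j x_F y_Fj.
by apply: r_F x_F _; apply/flattenP; exists (nth [::] Fs j) => //; exact: mem_nth.
Qed.

Lemma flatten_subseq (T : eqType) (Fs Bs : seq (seq T)) :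
  all2 subseq Fs Bs -> subseq (flatten Fs) (flatten Bs).
Proof.
elim: Fs Bs => [|F Fs IH] [|B Bs] //= /andP [sub_F sub_Fs].
exact: cat_subseq sub_F (IH _ sub_Fs).
Qed.

Lemma large_onat d Y : d <= size Y -> large (onat d) Y.
Proof. by elim: Y d => [|y Y IH] [|d] //= le_dY; rewrite ?large0 // large_cons IH. Qed.

Lemma grouping_from_flatten a b X P Fs :
  a != [::] -> sorted ltn (flatten Fs) -> {subset flatten Fs <= X} -> all (large a) Fs ->
  large b (map maxX Fs) -> pair_homogeneous P Fs -> grouping a b X P Fs.
Proof.
move=> a_nil sorted_Fs sub_X /all_nthP large_Fs large_b hom_Fs.
have nth_Fs i : i < size Fs -> nth [::] Fs i \in Fs by exact: mem_nth.
have in_X i : i < size Fs -> {subset nth [::] Fs i <= X}.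
  by move=> lt_i z z_F; apply: sub_X; apply/flattenP; exists (nth [::] Fs i); rewrite ?nth_Fs.
have nonempty k : k < size Fs -> exists z s, nth [::] Fs k = z :: s.
  move=> /(large_Fs [::]); case: (nth [::] Fs k) => [|z s]; last by exists z, s.
  by rewrite /large /= (negbTE a_nil).
split=> [i lt_i|].
  by split; [exact: sorted_flatten sorted_Fs (nth_Fs i lt_i) | exact: in_X].
split=> [i j lt_ij lt_j|]; last by split=> // i /(large_Fs [::]).
have [x [F E_i]] := nonempty i (ltn_trans lt_ij lt_j).
have [y [G E_j]] := nonempty j lt_j.
rewrite /maxX /minX E_i E_j /=; apply: (sorted_flatten_nth ltn_trans sorted_Fs (i := i) (j := j)).
- by rewrite lt_ij.
- by rewrite E_i mem_last.
- by rewrite E_j mem_head.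
Qed.

Theorem lemma2p6 (n d : nat) (X : seq nat) :
  finset_nat X ->
  large (oexp n.+3) X ->
  exp_sparse X ->
  d <= minX X ->
  forall P : nat -> nat -> bool,
    exists Fs : seq (seq nat), grouping (oexp n) (onat d) X P Fs.
Proof.
move=> sorted_X large_X sparse_X le_d_min P.
have sparse4_X := exp_sparse_sorted sorted_X sparse_X.
have {large_X} : large (oexp n.+2) X.
  apply: large_oexp_S (sub_sorted sparse4_sparse2 sparse4_X) _ large_X.
  by case: sparse_X => ge3 _ z /ge3; lia.
case: X sorted_X sparse4_X le_d_min {sparse_X} => [//|x0 X] sorted_X sparse4_X le_d_x0.
rewrite large_cons [fs _ _]/= cats0 => large_X.
have [Bs [W [size_Bs large_Bs def_X]]] := large_nseq_blocks le_d_x0 large_X.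
move: sorted_X sparse4_X; rewrite /= def_X !cat_path => /andP [sorted_Bs _] /andP [sparse_Bs _].
have [|Fs [sub_Fs large_Fs hom_Fs]] := exists_grouping_blocks P _ sparse_Bs large_Bs.
  by rewrite size_Bs.
have sub_flatten := flatten_subseq sub_Fs.
exists Fs; apply: grouping_from_flatten => //.
- exact: (subseq_sorted ltn_trans sub_flatten (path_sorted sorted_Bs)).
- by move=> z /(mem_subseq sub_flatten) z_Bs; rewrite inE mem_cat z_Bs orbT.
- by apply/allP => F /large_Fs [].
- by rewrite large_onat // size_map; move: sub_Fs; rewrite all2E size_Bs => /andP [/eqP ->].
Qed.
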